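(* Let $\alpha:\{0,1,2\}^*\to\{0,1,2\}^*$ be the $31$-uniform morphism defined by $\alpha(0)=0121021201020120210201021201210$, $\alpha(1)=1202102012101201021012102012021$, $\alpha(2)=2010210120212012102120210120102$. Then each $\alpha(a)$ is a palindrome, $\alpha(0)=z^R0z$ with $z=210201021201210$, and the infinite fixed point $\alpha^\omega(0)$ contains no factor that is a $(p/q)$-power with $p/q>\tfrac74$.
   Context: A word $x=x[1..n]$ has period $q$ if $x[i]=x[i+q]$ for $1\le i\le n-q$. For integers $p>q\ge1$, $x$ is a $(p/q)$-power if it has length $p$ and period $q$. $z^R$ denotes the reversal of $z$. The fixed point $\alpha^\omega(0)$ is the infinite word having every $\alpha^n(0)$ as a prefix. *)

From mathcomp Require Import all_boot.
Set Implicit Arguments. Unset Strict Implicit. Unset Printing Implicit Defensive.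

Definition alpha0 : seq nat := [:: 0; 1; 2; 1; 0; 2; 1; 2; 0; 1; 0; 2; 0; 1; 2; 0; 2; 1; 0; 2; 0; 1; 0; 2; 1; 2; 0; 1; 2; 1; 0].
Definition alpha1 : seq nat := [:: 1; 2; 0; 2; 1; 0; 2; 0; 1; 2; 1; 0; 1; 2; 0; 1; 0; 2; 1; 0; 1; 2; 1; 0; 2; 0; 1; 2; 0; 2; 1].
Definition alpha2 : seq nat := [:: 2; 0; 1; 0; 2; 1; 0; 1; 2; 0; 2; 1; 2; 0; 1; 2; 1; 0; 2; 1; 2; 0; 2; 1; 0; 1; 2; 0; 1; 0; 2].

(* the morphism on letters (letters other than 0,1 are only 2 in {0,1,2}) *)
Definition alpha (a : nat) : seq nat :=
  match a with 0 => alpha0 | 1 => alpha1 | _ => alpha2 end.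

Definition alpha_word (s : seq nat) : seq nat := flatten (map alpha s).

Definition zword : seq nat := [:: 2; 1; 0; 2; 0; 1; 0; 2; 1; 2; 0; 1; 2; 1; 0].

Definition palindrome (s : seq nat) : Prop := rev s = s.

Definition is_alpha_fixed_point (w : nat -> nat) : Prop :=
  forall n i, i < size (iter n alpha_word [:: 0]) ->
    w i = nth 0 (iter n alpha_word [:: 0]) i.

(* the factor w[i .. i+p-1] (0-indexed) is a (p/q)-power: length p, period q *)
Definition factor_is_power (w : nat -> nat) (i p q : nat) : Prop :=
  [/\ 1 <= q, q < p & forall k, k + q < p -> w (i + k) = w (i + k + q)].

From mathcomp Require Import all_boot zify.

(* alpha(1) and alpha(2) are obtained from alpha(0) by the letter permutation
   x |-> x + 1 (mod 3), so all three images are palindromes because alpha(0)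
   is, and the letter at any fixed position of alpha(a) determines a.
   Short periods q <= 14 are excluded by inspecting the factors alpha(a)alpha(b)
   with a <> b, which contain every factor of length 32 of the fixed point.
   A power of exponent > 7/4 with period q >= 15 repeats its first 11 letters
   at distance q; every factor of length 11 determines its position modulo 31,
   so 31 divides q, and the power desubstitutes to a power of period q/31 whose
   exponent is still > 7/4.  Induction on q concludes. *)

Lemma size_alpha a : size (alpha a) = 31.
Proof. by case: a => [|[|a]]. Qed.

Lemma alpha_lt3 a r : nth 0 (alpha a) r < 3.
Proof.
have /allP alpha_a : all (fun x => x < 3) (alpha a) by case: a => [|[|a]].
have [r_lt | r_ge] := ltnP r (size (alpha a)); first by apply/alpha_a/mem_nth.
by rewrite nth_default.
Qed.

Lemma alpha_shift a : a < 3 -> alpha a = [seq (x + a) %% 3 | x <- alpha 0].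
Proof. by case: a => [|[|[|a]]] // _; apply/eqP; vm_compute. Qed.

Lemma nth_alpha a r : a < 3 -> r < 31 ->
  nth 0 (alpha a) r = (nth 0 (alpha 0) r + a) %% 3.
Proof. by move=> a_lt r_lt; rewrite alpha_shift // (nth_map 0) ?size_alpha. Qed.

Lemma nth_alpha_inj a b r : a < 3 -> b < 3 -> r < 31 ->
  nth 0 (alpha a) r = nth 0 (alpha b) r -> a = b.
Proof.
move=> a_lt b_lt r_lt.
by rewrite (nth_alpha _ _ a_lt r_lt) (nth_alpha _ _ b_lt r_lt); lia.
Qed.

Lemma alpha_first a : a < 3 -> nth 0 (alpha a) 0 = a.
Proof. by move=> a_lt; rewrite nth_alpha //= modn_small. Qed.

Lemma alpha_last a : a < 3 -> nth 0 (alpha a) 30 = a.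
Proof. by move=> a_lt; rewrite nth_alpha //= modn_small. Qed.

Lemma alpha_adjacent_neq a r : a < 3 -> r < 30 ->
  nth 0 (alpha a) r != nth 0 (alpha a) r.+1.
Proof.
move=> a_lt r_lt.
rewrite (nth_alpha a r a_lt (ltnW r_lt)) (nth_alpha a r.+1 a_lt r_lt).
have /allP/(_ r) : all (fun r => nth 0 (alpha 0) r != nth 0 (alpha 0) r.+1)
                       (iota 0 30) by vm_compute.
rewrite mem_iota => /(_ r_lt) neq; apply/eqP => eq_mod; move/eqP: neq; apply.
by have := alpha_lt3 0 r; have := alpha_lt3 0 r.+1; lia.
Qed.

Lemma alpha_palindrome a : a < 3 -> palindrome (alpha a).
Proof. by move=> a_lt; rewrite /palindrome alpha_shift // -map_rev. Qed.

Lemma size_alpha_word s : size (alpha_word s) = 31 * size s.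
Proof.
elim: s => [|a s IHs] //=.
by rewrite /alpha_word /= size_cat size_alpha -/(alpha_word s) IHs mulnS.
Qed.

Lemma nth_alpha_word s k r : r < 31 -> k < size s ->
  nth 0 (alpha_word s) (31 * k + r) = nth 0 (alpha (nth 0 s k)) r.
Proof.
move=> r_lt; elim: s k => [|a s IHs] [|k] //= k_lt.
  by rewrite /alpha_word /= muln0 add0n nth_cat size_alpha r_lt.
rewrite /alpha_word /= nth_cat size_alpha ifF; last lia.
have -> : 31 * k.+1 + r - 31 = 31 * k + r by lia.
exact: IHs.
Qed.

Lemma size_iter_alpha_word n : size (iter n alpha_word [:: 0]) = 31 ^ n.
Proof. by elim: n => [|n IHn] //=; rewrite size_alpha_word IHn expnS. Qed.

(* The factor of length 32 of the fixed point at position [i] is a prefix of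
   [context a b (i mod 31)] for some letters [a <> b]; [contexts] lists all
   these suffixes together with their offsets. *)
Definition context (a b r : nat) : seq nat := drop r (alpha a ++ alpha b).

Definition contexts : seq (nat * seq nat) :=
  [seq (r, context ab.1 ab.2 r)
  | ab <- [seq (a, b) | a <- iota 0 3, b <- rem a (iota 0 3)], r <- iota 0 31].

Lemma mem_contexts a b r : a < 3 -> b < 3 -> a != b -> r < 31 ->
  (r, context a b r) \in contexts.
Proof.
move=> a_lt b_lt a_neq_b r_lt.
apply/allpairsP; exists ((a, b), r); split; rewrite ?mem_iota //.
apply/allpairsPdep; exists a, b; split; rewrite ?mem_iota //.
by rewrite mem_rem_uniq ?iota_uniq // inE eq_sym a_neq_b mem_iota.
Qed.

Lemma size_context a b r : size (context a b r) = 62 - r.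
Proof. by rewrite size_drop size_cat !size_alpha. Qed.

Lemma contexts_synchronizing :
  all (fun c1 => all (fun c2 =>
         (take 11 c1.2 == take 11 c2.2) ==> (c1.1 == c2.1)) contexts) contexts.
Proof. by vm_compute. Qed.

Definition has_period (s : seq nat) (q : nat) : bool :=
  all (fun k => nth 0 s k == nth 0 s (k + q)) (iota 0 (size s - q)).

(* A power with [7 q < 4 p] has length at least [7 q / 4 + 1]. *)
Lemma contexts_short_power_free :
  all (fun c => all (fun q => ~~ has_period (take (7 * q %/ 4).+1 c.2) q)
                    (iota 1 14)) contexts.
Proof. by vm_compute. Qed.

Section FixedPoint.

Variable w : nat -> nat.
Hypothesis w_fixed : is_alpha_fixed_point w.

Lemma fixed_point_block j r : r < 31 -> w (31 * j + r) = nth 0 (alpha (w j)) r.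
Proof.
move=> r_lt; have j_lt : j < 31 ^ j by apply: ltn_expl.
rewrite (w_fixed j.+1); last by rewrite size_iter_alpha_word expnS; lia.
rewrite (w_fixed j) ?size_iter_alpha_word //=.
by rewrite nth_alpha_word ?size_iter_alpha_word.
Qed.

Lemma fixed_point_lt3 i : w i < 3.
Proof.
by rewrite (divn_eq i 31) mulnC fixed_point_block ?alpha_lt3 ?ltn_pmod.
Qed.

(* Inside a block use [alpha_adjacent_neq]; across blocks, [alpha a] begins
   and ends with [a]. *)
Lemma fixed_point_adjacent_neq i : w i != w i.+1.
Proof.
elim/ltn_ind: i => i IH; have r_lt := ltn_pmod i (isT : 0 < 31).
have [r_lt30 | r_ge30] := ltnP (i %% 31) 30.
  have -> : i.+1 = 31 * (i %/ 31) + (i %% 31).+1 by lia.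
  rewrite {1}(divn_eq i 31) mulnC !fixed_point_block //.
  exact: alpha_adjacent_neq (fixed_point_lt3 _) r_lt30.
have r30 : i %% 31 = 30 by lia.
have -> : i.+1 = 31 * (i %/ 31).+1 + 0 by lia.
rewrite {1}(divn_eq i 31) mulnC r30 !fixed_point_block //.
rewrite alpha_first ?alpha_last ?fixed_point_lt3 //.
by apply: IH; lia.
Qed.

Definition context_at (i : nat) : seq nat :=
  context (w (i %/ 31)) (w (i %/ 31).+1) (i %% 31).

Lemma context_at_mem i : (i %% 31, context_at i) \in contexts.
Proof.
by rewrite mem_contexts ?fixed_point_lt3 ?fixed_point_adjacent_neq ?ltn_pmod.
Qed.

Lemma nth_context_at i k : k < 32 -> nth 0 (context_at i) k = w (i + k).
Proof.
move=> k_lt; rewrite /context_at /context nth_drop nth_cat size_alpha.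
have [in_first | in_second] := ltnP (i %% 31 + k) 31.
  by rewrite -fixed_point_block //; congr w; lia.
rewrite -fixed_point_block; last lia.
by congr w; lia.
Qed.

Lemma take_context_at i n : n <= 32 ->
  take n (context_at i) = mkseq (fun k => w (i + k)) n.
Proof.
move=> n_le.
have n_le_size : n <= size (context_at i) by rewrite size_context; lia.
apply: (@eq_from_nth _ 0); first by rewrite size_takel ?size_mkseq.
move=> k; rewrite size_takel // => k_lt.
by rewrite nth_take // nth_mkseq // nth_context_at //; lia.
Qed.

Lemma fixed_point_synchronizing i1 i2 :
  (forall k, k < 11 -> w (i1 + k) = w (i2 + k)) -> i1 %% 31 = i2 %% 31.
Proof.
move=> eq_w; apply/eqP.
move/allP/(_ _ (context_at_mem i1))/allP/(_ _ (context_at_mem i2))/implyP: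
  contexts_synchronizing; apply.
rewrite !take_context_at //; apply/eqP/eq_in_map => k.
by rewrite mem_iota => /andP[_ k_lt]; apply: eq_w.
Qed.

Lemma fixed_point_short_power i p q : q < 15 ->
  factor_is_power w i p q -> ~ 7 * q < 4 * p.
Proof.
move=> q_lt [q_pos _ period] power_lt.
move/allP/(_ _ (context_at_mem i))/allP/(_ q): contexts_short_power_free.
rewrite mem_iota q_pos q_lt => /(_ isT)/negP; apply.
rewrite take_context_at; last lia.
apply/allP => k; rewrite size_mkseq mem_iota => /andP[_ k_lt].
by rewrite !nth_mkseq; [rewrite addnA period // | lia | lia]; lia.
Qed.

(* Block [i / 31 + j] meets the part [i, i + p - 31 q) of the power whenever
   [31 j < p - 31 q]; at a common position, [nth_alpha_inj] recovers the
   coded letters. *)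
Lemma fixed_point_desubstitution i p q : factor_is_power w i p (31 * q) ->
  factor_is_power w (i %/ 31) (q + (p - 31 * q + 30) %/ 31) q.
Proof.
case=> q_pos q_lt_p period; split; [lia | lia | move=> j j_lt].
set r := i %% 31 - 31 * j.
have r_lt : r < 31 by lia.
apply: (@nth_alpha_inj _ _ r); rewrite ?fixed_point_lt3 //.
rewrite -!fixed_point_block //.
have -> : 31 * (i %/ 31 + j) + r = i + (31 * j - i %% 31) by lia.
have -> : 31 * (i %/ 31 + j + q) + r = i + (31 * j - i %% 31) + 31 * q by lia.
by apply: period; lia.
Qed.

Lemma fixed_point_power_free i p q : factor_is_power w i p q -> ~ 7 * q < 4 * p.
Proof.
elim/ltn_ind: q i p => q IH i p power power_lt.
have [q_lt | q_ge] := ltnP q 15.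
  exact: fixed_point_short_power q_lt power power_lt.
have [_ _ period] := power.
have sync : i %% 31 = (i + q) %% 31.
  by apply: fixed_point_synchronizing => k k_lt; rewrite addnAC period //; lia.
have q_eq : q = 31 * (q %/ 31) by lia.
rewrite q_eq in power power_lt.
apply: (IH (q %/ 31) _ _ _ (fixed_point_desubstitution _ _ _ power)); lia.
Qed.

End FixedPoint.

Theorem mainTheorem10 :
  (forall a, a < 3 -> palindrome (alpha a)) /\
  alpha 0 = rev zword ++ [:: 0] ++ zword /\
  (forall w : nat -> nat, is_alpha_fixed_point w ->
     forall i p q, factor_is_power w i p q -> ~ (7 * q < 4 * p)).
Proof.
split; first exact: alpha_palindrome.
split; first by [].
by move=> w w_fixed i p q; apply: fixed_point_power_free.
Qed.
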